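(* Let $\mathcal{F}\subseteq 2^{[n]}$ be an s-extremal family. Then there is a unique Sperner family $\mathcal{S}\subseteq 2^{[n]}$ and a unique function $h:\mathcal{S}\to 2^{[n]}$ with $h(S)\subseteq S$ for every $S\in\mathcal{S}$ such that $\mathcal{F}=\mathcal{F}(\mathcal{S},h)$ and $\mathrm{Sh}(\mathcal{F})=\mathcal{H}(\mathcal{S})$.
   Context: $[n]=\{1,\dots,n\}$. A Sperner family is a family of sets none of which is contained in another. $\mathcal{F}$ shatters $S$ if $\{F\cap S:F\in\mathcal{F}\}=2^S$; $\mathrm{Sh}(\mathcal{F})$ is the family of shattered sets; $\mathcal{F}$ is s-extremal if $|\mathrm{Sh}(\mathcal{F})|=|\mathcal{F}|$. For $H\subseteq S\subseteq[n]$, $\mathcal{Q}_{S,H}=\{H\cup B: B\subseteq[n]\setminus S\}$. $\mathcal{H}(\mathcal{S})=\{F\subseteq[n]: \text{no } S\in\mathcal{S} \text{ satisfies } S\subseteq F\}$, and $\mathcal{F}(\mathcal{S},h)=2^{[n]}\setminus\bigcup_{S\in\mathcal{S}}\mathcal{Q}_{S,h(S)}$. *)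

From mathcomp Require Import all_boot.
Set Implicit Arguments. Unset Strict Implicit. Unset Printing Implicit Defensive.

Section Defs.
Variable n : nat.
Local Notation T := {set 'I_n}.

Definition sperner (S : {set T}) : Prop :=
  forall A B, A \in S -> B \in S -> A \subset B -> A = B.

Definition shatters (F : {set T}) (X : T) : bool :=
  [set F0 :&: X | F0 in F] == powerset X.

Definition Sh (F : {set T}) : {set T} := [set X | shatters F X].

Definition s_extremal (F : {set T}) : Prop := #|Sh F| = #|F|.

Definition Q (S H : T) : {set T} := [set H :|: B | B in powerset (~: S)].

Definition HS (SS : {set T}) : {set T} :=
  [set F : T | [forall S in SS, ~~ (S \subset F)]].

Definition FSh (SS : {set T}) (h : T -> T) : {set T} :=
  ~: \bigcup_(S in SS) Q S (h S).
End Defs.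

(* Pajor's lemma |F| <= |Sh F| goes by induction on the ground set: for an element i,
   |F| = |F\i| + |D_i|, where D_i collects the sets A not containing i with A and A+i
   in F, while |Sh(F\i)| + |Sh D_i| <= |Sh F| (a set shattered by D_i stays shattered
   by F after adding i).  Equality for F therefore forces equality for F\i, so
   s-extremality passes to projections and hence to every trace F|_S.

   Sh F is a down-set, so Sh F = H(SS) for the Sperner family SS of its minimal
   non-members, and SS is recovered from H(SS).  For S in SS the trace F|_S is
   extremal with Sh(F|_S) = 2^S \ {S}, so exactly one subset h(S) of S is missing
   from F|_S.  Hence F is contained in F(SS,h), and since Sh(F(SS,h)) lies in
   H(SS) = Sh F, Pajor's lemma forces equality.  Any h' as in the statement also
   picks a subset of S missing from F|_S, so h' = h on SS. *)

From mathcomp Require Import all_boot.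
Set Implicit Arguments. Unset Strict Implicit. Unset Printing Implicit Defensive.

Section SExtremal.
Variable n : nat.
Local Notation T := {set 'I_n}.
Implicit Types (F G SS : {set T}) (A B H X Y S : T) (h : T -> T) (i : 'I_n).

Lemma shattersP F X :
  reflect (forall Y, Y \subset X -> exists2 A, A \in F & A :&: X = Y) (shatters F X).
Proof.
rewrite /shatters eqEsubset.
have -> : [set A :&: X | A in F] \subset powerset X.
  by apply/subsetP => _ /imsetP[A _ ->]; rewrite powersetE subsetIr.
apply: (iffP idP) => [sub Y YX | shX].
  have /(subsetP sub)/imsetP[A AF ->] : Y \in powerset X by rewrite powersetE.
  by exists A.
by apply/subsetP => Y; rewrite powersetE => /shX[A AF <-]; apply: imset_f.
Qed.

Lemma Sh_downward F X Y : X \in Sh F -> Y \subset X -> Y \in Sh F.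
Proof.
rewrite !inE => /shattersP shX YX; apply/shattersP => Z ZY.
have [A AF AX] := shX Z (subset_trans ZY YX).
by exists A => //; rewrite -(setIidPr YX) setIA AX (setIidPl ZY).
Qed.

Lemma ShS F G : F \subset G -> Sh F \subset Sh G.
Proof.
move=> FG; apply/subsetP => X; rewrite !inE => /shattersP shX.
by apply/shattersP => Y /shX[A AF AX]; exists A => //; apply: (subsetP FG).
Qed.

Lemma Sh_sub_cover F X : X \in Sh F -> X \subset cover F.
Proof.
rewrite inE => /shattersP/(_ X (subxx X))[A AF AX].
by rewrite -AX (subset_trans (subsetIl A X)) // (bigcup_sup A AF).
Qed.

Definition trace S F := [set A :&: S | A in F].

Lemma Sh_trace F S X : (X \in Sh (trace S F)) = (X \subset S) && (X \in Sh F).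
Proof.
have traceX A : X \subset S -> A :&: S :&: X = A :&: X.
  by move=> XS; rewrite -setIA (setIidPr XS).
apply/idP/andP => [shX | [XS]].
  have XS : X \subset S.
    apply: subset_trans (Sh_sub_cover shX) _.
    by apply/bigcupsP => _ /imsetP[A _ ->]; apply: subsetIr.
  split=> //; move: shX; rewrite !inE => /shattersP shX; apply/shattersP => Y YX.
  by have [_ /imsetP[A AF ->] <-] := shX Y YX; exists A; rewrite ?traceX.
rewrite !inE => /shattersP shX; apply/shattersP => Y /shX[A AF <-].
by exists (A :&: S); [apply: imset_f | apply: traceX].
Qed.

Lemma setD1_notin i A : i \notin A -> A :\ i = A.
Proof. by move=> iA; apply/setDidPl; rewrite disjoint_sym disjoints1. Qed.

Definition proj i F := [set A :\ i | A in F].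
Definition doubled i F := [set A in F | (i \notin A) && (i |: A \in F)].

Lemma card_proj_doubled i F : #|F| = #|proj i F| + #|doubled i F|.
Proof.
pose Fi := F :&: [set A : T | i \in A]; pose F0 := F :\: [set A : T | i \in A].
pose F1 := [set A :\ i | A in Fi].
have card_F1 : #|F1| = #|Fi|.
  apply: card_in_imset => A B; rewrite !inE => /andP[_ iA] /andP[_ iB] eqAB.
  by rewrite -(setD1K iA) -(setD1K iB) eqAB.
have proj_eq : proj i F = F0 :|: F1.
  apply/setP => B; apply/imsetP/setUP => [[A AF ->] | [|/imsetP[A]]].
  - case iA: (i \in A); [right | left]; first by apply: imset_f; rewrite !inE AF.
    by rewrite setD1_notin ?iA // !inE AF iA.
  - by rewrite !inE => /andP[iB BF]; exists B; rewrite ?setD1_notin.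
  - by rewrite !inE => /andP[AF _] ->; exists A.
have doubled_eq : doubled i F = F0 :&: F1.
  apply/setP => B; rewrite !inE; apply/and3P/andP => [[BF iB iBF] | [/andP[iB BF]]].
    split; first by rewrite iB.
    by apply/imsetP; exists (i |: B); rewrite ?setU1K // !inE iBF eqxx.
  by case/imsetP => A; rewrite !inE => /andP[AF iA] eB; split; rewrite // eB setD1K.
rewrite proj_eq doubled_eq cardsUI card_F1 addnC.
by rewrite -(cardsID [set A : T | i \in A] F).
Qed.

Lemma notin_Sh_proj i F X : X \in Sh (proj i F) -> i \notin X.
Proof.
move/Sh_sub_cover/subsetP => Xcover; apply/negP => /Xcover/bigcupP[_ /imsetP[A _ ->]].
by rewrite setD11.
Qed.

Lemma doubled_sub_proj i F : doubled i F \subset proj i F.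
Proof.
apply/subsetP => A; rewrite inE => /and3P[AF iA _].
by apply/imsetP; exists A; rewrite ?setD1_notin.
Qed.

Lemma Sh_proj_sub i F : Sh (proj i F) \subset Sh F.
Proof.
apply/subsetP => X shX; have iX := notin_Sh_proj shX.
move: shX; rewrite !inE => /shattersP shX; apply/shattersP => Y /shX[_ /imsetP[A AF ->] <-].
exists A => //; apply/setP => x; rewrite !inE.
by case: eqP => // ->; rewrite (negbTE iX) andbF.
Qed.

Lemma notin_Sh_doubled i F X : X \in Sh (doubled i F) -> i \notin X.
Proof. by move/(subsetP (ShS (doubled_sub_proj i F)))/notin_Sh_proj. Qed.

Lemma setU1_Sh_doubled i F X : X \in Sh (doubled i F) -> i |: X \in Sh F.
Proof.
move=> shX; have iX := notin_Sh_doubled shX.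
move: shX; rewrite !inE => /shattersP shX; apply/shattersP => Y YiX.
have [|A] := shX (Y :\ i).
  by apply/subsetP => x /setD1P[xi /(subsetP YiX)]; rewrite !inE (negbTE xi).
rewrite inE => /and3P[AF iA iAF] AX.
case iY: (i \in Y); [exists (i |: A) | exists A] => //.
  by rewrite -setUIr AX setD1K.
apply/setP => x; move/setP/(_ x): AX; rewrite !inE.
by case: eqP => [->|] //=; rewrite iY (negbTE iA).
Qed.

Lemma leq_Sh_proj_doubled i F : #|Sh (proj i F)| + #|Sh (doubled i F)| <= #|Sh F|.
Proof.
pose D := [set i |: X | X in Sh (doubled i F)].
have card_D : #|D| = #|Sh (doubled i F)|.
  apply: card_in_imset => X Y /notin_Sh_doubled iX /notin_Sh_doubled iY eqXY.
  by rewrite -(setU1K iX) -(setU1K iY) eqXY.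
have disjoint_D : Sh (proj i F) :&: D = set0.
  apply/setP => X; rewrite in_setI in_set0; apply/andP => -[/notin_Sh_proj iX /imsetP[Y _ eX]].
  by rewrite eX setU11 in iX.
rewrite -card_D -cardsUI disjoint_D cards0 addn0 subset_leq_card // subUset Sh_proj_sub.
by apply/subsetP => _ /imsetP[X shX ->]; apply: setU1_Sh_doubled.
Qed.

Lemma leq_card_Sh F : #|F| <= #|Sh F|.
Proof.
move: {2}#|cover F|.+1 (ltnSn #|cover F|) => k; elim: k F => [|k IHk] F // coverF.
have [cover0 | [i icover]] := set_0Vmem (cover F).
  have [-> | [A AF]] := set_0Vmem F; first by rewrite cards0.
  have F_sub : F \subset [set set0].
    by apply/subsetP => B BF; rewrite inE -subset0 -cover0 (bigcup_sup B BF).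
  have sh0 : set0 \in Sh F.
    rewrite inE; apply/shattersP => Y; rewrite subset0 => /eqP->.
    by exists A; rewrite ?setI0.
  rewrite (leq_trans (subset_leq_card F_sub)) // cards1 card_gt0.
  by apply/set0Pn; exists set0.
have IHproj G : G \subset proj i F -> #|G| <= #|Sh G|.
  move=> GP; apply: IHk; rewrite -ltnS (leq_trans _ coverF) // ltnS.
  rewrite (cardsD1 i (cover F)) icover add1n ltnS subset_leq_card //.
  apply/bigcupsP => _ /(subsetP GP)/imsetP[A AF ->].
  exact: setSD (bigcup_sup A AF).
rewrite (card_proj_doubled i) (leq_trans _ (leq_Sh_proj_doubled i F)) //.
by rewrite leq_add ?IHproj ?doubled_sub_proj.
Qed.

Lemma proj_extremal i F : s_extremal F -> s_extremal (proj i F).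
Proof.
move=> extF; apply/eqP; rewrite eqn_leq leq_card_Sh andbT.
rewrite -(leq_add2r #|Sh (doubled i F)|) (leq_trans (leq_Sh_proj_doubled i F)) //.
by rewrite extF (card_proj_doubled i) leq_add2l leq_card_Sh.
Qed.

Lemma setD_extremal F D : s_extremal F -> s_extremal [set A :\: D | A in F].
Proof.
move=> extF; rewrite -(set_enum D); elim: (enum D) => [|i s IHs].
  by rewrite (eq_imset (g := id)) ?imset_id // => A; apply/setP => x; rewrite !inE.
have -> : [set A :\: [set x | x \in i :: s] | A in F]
          = proj i [set A :\: [set x | x \in s] | A in F].
  rewrite /proj -imset_comp; apply: eq_imset => A /=; apply/setP => x.
  by rewrite !inE negb_or andbA.
exact: proj_extremal.
Qed.

Lemma trace_extremal F S : s_extremal F -> s_extremal (trace S F).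
Proof.
move/(setD_extremal (~: S)); congr s_extremal; apply: eq_imset => A.
by rewrite setDE setCK.
Qed.

Definition minimal_nonmembers (D : {set T}) := [set S | minset [pred X : T | X \notin D] S].

Lemma sperner_minimal_nonmembers (D : {set T}) : sperner (minimal_nonmembers D).
Proof. by move=> A B; rewrite !inE => /minsetp notA /minsetP[_ minB] /minB->. Qed.

Lemma HS_minimal_nonmembers (D : {set T}) :
  (forall X Y, X \in D -> Y \subset X -> Y \in D) -> HS (minimal_nonmembers D) = D.
Proof.
move=> downD; apply/setP => X; rewrite inE; apply/forall_inP/idP => [noS | XD S].
  apply: contraT => XnotD; have [S minS SX] := @minset_exists _ [pred Y | Y \notin D] X XnotD.
  by have := noS S; rewrite inE minS SX => /(_ isT).
by rewrite inE => /minsetP[/negP SnotD _]; apply/negP => /(downD X S XD).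
Qed.

Lemma minimal_nonmembers_HS SS : sperner SS -> minimal_nonmembers (HS SS) = SS.
Proof.
move=> spSS; have notHS S : S \in SS -> S \notin HS SS.
  by move=> SSS; rewrite inE negb_forall_in; apply/exists_inP; exists S; rewrite ?negbK.
apply/setP => S; rewrite inE; apply/minsetP/idP => [[/= notS minS] | SSS].
  move: notS; rewrite inE negb_forall_in => /exists_inP[S' S'SS /negbNE S'S].
  by rewrite -(minS S') // notHS.
split=> [|B /=]; first exact: notHS.
rewrite inE negb_forall_in => /exists_inP[S' S'SS /negbNE S'B] BS.
have eqS : S' = S := spSS S' S S'SS SSS (subset_trans S'B BS).
by apply/eqP; rewrite eqEsubset BS -eqS S'B.
Qed.

Lemma mem_Q S H A : H \subset S -> (A \in Q S H) = (A :&: S == H).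
Proof.
move=> HS; apply/imsetP/eqP => [[B] | <-].
  rewrite powersetE -disjoints_subset -setI_eq0 => /eqP BS0 ->.
  by rewrite setIUl (setIidPl HS) BS0 setU0.
by exists (A :\: S); rewrite ?setID // powersetE setDE subsetIr.
Qed.

Lemma FShP SS h A : {in SS, forall S, h S \subset S} ->
  reflect (forall S, S \in SS -> A :&: S != h S) (A \in FSh SS h).
Proof.
move=> hS; rewrite in_setC; apply: (iffP negP) => [noQ S SSS | neq /bigcupP[S SSS]].
  by rewrite -(mem_Q A (hS S SSS)); apply/negP => AQ; apply: noQ; apply/bigcupP; exists S.
by rewrite mem_Q ?hS // (negbTE (neq S SSS)).
Qed.

Lemma Sh_FSh_sub SS h : {in SS, forall S, h S \subset S} -> Sh (FSh SS h) \subset HS SS.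
Proof.
move=> hS; apply/subsetP => X shX; rewrite inE; apply/forall_inP => S SSS.
apply/negP => SX; move: shX; rewrite inE => /shattersP.
case/(_ (h S) (subset_trans (hS S SSS) SX)) => A /(FShP _ hS)/(_ S SSS)/negP neqS AX.
apply: neqS; have -> : A :&: S = A :&: X :&: S by rewrite -setIA (setIidPr SX).
by rewrite AX; apply/eqP/setIidPl/hS.
Qed.

Lemma sub_FShP F SS h : {in SS, forall S, h S \subset S} ->
  reflect {in SS, forall S, h S \notin trace S F} (F \subset FSh SS h).
Proof.
move=> hS; apply: (iffP subsetP) => [FG S SSS | notr A AF].
  apply/imsetP => -[A /FG/(FShP _ hS)/(_ S SSS)].
  by rewrite eq_sym => /eqP.
apply/(FShP _ hS) => S SSS; apply: contraNneq (notr S SSS) => <-; exact: imset_f.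
Qed.

Definition missing_traces F S := powerset S :\: trace S F.
Definition missing_trace F S := odflt S [pick H in missing_traces F S].

Lemma missing_tracesE F S : s_extremal F -> S \in minimal_nonmembers (Sh F) ->
  missing_traces F S = [set missing_trace F S].
Proof.
move=> extF; rewrite inE => /minsetP[/= notS minS].
have Sh_traceE : Sh (trace S F) = powerset S :\ S.
  apply/setP => X; rewrite Sh_trace in_setD1 powersetE.
  case: (eqVneq X S) => [-> | neqXS] /=; first by rewrite (negbTE notS) andbF.
  case XS: (X \subset S) => //=; apply/negPn/negP => notX.
  by rewrite (minS X notX XS) eqxx in neqXS.
have trace_sub : trace S F \subset powerset S.
  by apply/subsetP => _ /imsetP[A _ ->]; rewrite powersetE subsetIr.
have /cards1P[M eqM] : #|missing_traces F S| == 1.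
  rewrite cardsD (setIidPr trace_sub) -(trace_extremal S extF) Sh_traceE.
  by rewrite (cardsD1 S (powerset S)) powersetE subxx add1n subSnn.
by rewrite /missing_trace eqM; case: pickP => [H /set1P-> | /(_ M)]; rewrite ?set11.
Qed.

End SExtremal.

Theorem lemma8 (n : nat) (F : {set {set 'I_n}}) :
  s_extremal F ->
  exists (SS : {set {set 'I_n}}) (h : {set 'I_n} -> {set 'I_n}),
    [/\ sperner SS,
        (forall S, S \in SS -> h S \subset S),
        F = FSh SS h,
        Sh F = HS SS &
        forall (SS' : {set {set 'I_n}}) (h' : {set 'I_n} -> {set 'I_n}),
          sperner SS' ->
          (forall S, S \in SS' -> h' S \subset S) ->
          F = FSh SS' h' -> Sh F = HS SS' ->
          SS' = SS /\ (forall S, S \in SS -> h' S = h S)].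
Proof.
move=> extF; pose SS := minimal_nonmembers (Sh F); pose h := missing_trace F.
have missingE S : S \in SS -> missing_traces F S = [set h S] := missing_tracesE extF.
have h_missing S : S \in SS -> (h S \notin trace S F) && (h S \subset S).
  by move/missingE/setP/(_ (h S)); rewrite set11 !inE.
have hS S : S \in SS -> h S \subset S by case/h_missing/andP.
have ShF : Sh F = HS SS by rewrite HS_minimal_nonmembers //; apply: Sh_downward.
have F_sub : F \subset FSh SS h.
  by apply/(sub_FShP _ hS) => S /h_missing/andP[].
have eqF : F = FSh SS h.
  apply/eqP; rewrite eqEcard F_sub (leq_trans (leq_card_Sh _)) // -extF ShF.
  exact/subset_leq_card/Sh_FSh_sub.
exists SS, h; split=> //; first exact: sperner_minimal_nonmembers.
move=> SS' h' spSS' hS' eqF' eqSh'.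
have eqSS : SS' = SS by rewrite /SS eqSh' minimal_nonmembers_HS.
have /(sub_FShP _ hS') notin_trace : F \subset FSh SS' h' by rewrite -eqF'.
by split=> // S SSS; apply/set1P; rewrite -missingE // !inE notin_trace ?hS' ?eqSS.
Qed.
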